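(* Let $P,Q,R\in D$ be non-collinear. Identify $S^1$ with $\mathbb{R}/\mathbb{Z}$ via $t\mapsto(\cos2\pi t,\sin2\pi t)$. Let $T_1,T_2\in S^1$ be the endpoints of the chord through $P,Q$, labelled so that $T_1-T_2\in(0,1/2]\bmod 1$; let $T_3\in S^1$ satisfy $2T_3=T_1+T_2\bmod 1$ and $T_3-T_2\in(0,1/2]\bmod1$, and let $T_4=T_3+\frac14\bmod 1$. Use Cartesian coordinates $(x_1,x_2)'$ with respect to the orthonormal basis $\{T_3,T_4\}$ (viewed as unit vectors). Let $u$ be the $x_1$-coordinate of $P$ (equal to that of $Q$), and $k:=e^{d'(P,Q)}$. Put $$A=\frac{2k(k^2+1)(1-u^2)}{(k^2-2ku+1)(k^2+2ku+1)},\quad B=\frac{(k^2+1)\sqrt{1-u^2}}{\sqrt{(k^2-2ku+1)(k^2+2ku+1)}},\quad C=\frac{(k^2-1)^2u}{(k^2-2ku+1)(k^2+2ku+1)},$$ and let $E=\{(x_1,x_2)': \frac{(x_1-C)^2}{A^2}+\frac{x_2^2}{B^2}=1\}$, with $\Phi$ the open region bounded by $E$. Then $E\subset D\cup S^1$ and $E$ is tangent to $S^1$ at $T_1$ and $T_2$. Moreover, if $m$ is the number of triangles inscribed in $S^1$ and circumscribing $\triangle PQR$, then $$m=\begin{cases}0 & \text{if } R\in\Phi,\\ 1 & \text{if } R\in E,\\ 2 & \text{if } R\in D\setminus\overline{\Phi}.\end{cases}$$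
   Context: $D=\{(x,y)\in\mathbb{R}^2: x^2+y^2<1\}$ (Beltrami–Klein disk), $S^1$ its boundary circle. For $P,Q\in D$, let $v_1,v_2\in S^1$ be the endpoints of the chord through $P,Q$; then $d'(P,Q)=\frac12\left|\log\frac{|v_1Q||v_2P|}{|v_1P||v_2Q|}\right|$ (this is the Poincaré-disk distance transported by the map $G^{-1}(x,y)=\left(\frac{x}{1+\sqrt{1-x^2-y^2}},\frac{y}{1+\sqrt{1-x^2-y^2}}\right)$). A triangle inscribed in $S^1$ and circumscribing $\triangle PQR$ is a Euclidean triangle with three distinct vertices on $S^1$ such that $P$, $Q$, $R$ lie on three distinct sides of it (one point on each side). *)

From Stdlib Require Import Reals ZArith Ensembles Finite_sets.
Open Scope R_scope.

Definition point := (R * R)%type.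

Definition norm2 (X : point) : R := fst X ^ 2 + snd X ^ 2.
(* Beltrami-Klein disk D and its boundary circle S^1 *)
Definition inD (X : point) : Prop := norm2 X < 1.
Definition onS1 (X : point) : Prop := norm2 X = 1.

Definition dist (X Y : point) : R :=
  sqrt ((fst X - fst Y) ^ 2 + (snd X - snd Y) ^ 2).

Definition cross3 (X Y Z : point) : R :=
  (fst Y - fst X) * (snd Z - snd X) - (snd Y - snd X) * (fst Z - fst X).
Definition collinear (X Y Z : point) : Prop := cross3 X Y Z = 0.

(* d'(P,Q) computed from the endpoints v1, v2 of the chord through P, Q *)
Definition dprime (v1 v2 P Q : point) : R :=
  / 2 * Rabs (ln ((dist v1 Q * dist v2 P) / (dist v1 P * dist v2 Q))).

Definition circ (t : R) : point := (cos (2 * PI * t), sin (2 * PI * t)).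

Definition coord1 (t3 : R) (X : point) : R :=
  fst X * fst (circ t3) + snd X * snd (circ t3).
Definition coord2 (t3 : R) (X : point) : R :=
  fst X * fst (circ (t3 + / 4)) + snd X * snd (circ (t3 + / 4)).

Definition ellA (k u : R) : R :=
  2 * k * (k ^ 2 + 1) * (1 - u ^ 2) /
  ((k ^ 2 - 2 * k * u + 1) * (k ^ 2 + 2 * k * u + 1)).
Definition ellB (k u : R) : R :=
  (k ^ 2 + 1) * sqrt (1 - u ^ 2) /
  sqrt ((k ^ 2 - 2 * k * u + 1) * (k ^ 2 + 2 * k * u + 1)).
Definition ellC (k u : R) : R :=
  (k ^ 2 - 1) ^ 2 * u /
  ((k ^ 2 - 2 * k * u + 1) * (k ^ 2 + 2 * k * u + 1)).

Definition ellF (t3 A B C : R) (X : point) : R :=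
  (coord1 t3 X - C) ^ 2 / A ^ 2 + coord2 t3 X ^ 2 / B ^ 2.

(* E is tangent to S^1 at X: X lies on both curves and the normal of E at X
   (the gradient of ellF, in (x1,x2)-coordinates) is parallel to the normal X
   of S^1 (in the same coordinates). *)
Definition ellipse_tangent_S1_at (t3 A B C : R) (X : point) : Prop :=
  onS1 X /\ ellF t3 A B C X = 1 /\
  (2 * (coord1 t3 X - C) / A ^ 2) * coord2 t3 X
    - (2 * coord2 t3 X / B ^ 2) * coord1 t3 X = 0.

Definition on_segment (X a b : point) : Prop :=
  exists s : R, 0 <= s <= 1 /\
    X = (fst a + s * (fst b - fst a), snd a + s * (snd b - snd a)).

Definition circumscribing_triangle (P Q R0 : point) (T : Ensemble point) : Prop :=
  exists a b c : point,
    onS1 a /\ onS1 b /\ onS1 c /\ a <> b /\ b <> c /\ a <> c /\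
    (forall x, In point T x <-> (x = a \/ x = b \/ x = c)) /\
    on_segment P a b /\ on_segment Q b c /\ on_segment R0 c a.

From Pilot Require Import Defs.
From Stdlib Require Import Reals ZArith Ensembles Finite_sets Constructive_sets Lra Lia Psatz
  FunctionalExtensionality PropExtensionality.
Open Scope R_scope.

(* A triangle inscribed in S^1 and circumscribing PQR is determined by its vertex b between
   the sides through P and Q: the other two vertices are the second endpoints of the chords
   from b through P and through Q, and the only remaining condition is that R lies on the
   chord joining them.  Clearing denominators, this condition reads, for b on S^1,
   cross3 b P Q * l(b) = 0 with l affine in b, and the points b on the line PQ give no
   triangle.  So the triangles correspond to the points of S^1 on the line l = 0, and there
   are 0, 1 or 2 of them according to the sign of a discriminant.  In coordinates adapted to
   the chord PQ, this discriminant is a positive multiple of F(R) - 1, where F(X) = 1 is the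
   equation of E.  Finally 1 - |X|^2 = c1 (x1 - u)^2 + c2 (1 - F(X)) with c1, c2 >= 0, so E
   lies in the closed disk and touches S^1 where x1 = u, that is at T1 and T2. *)

Definition dot (X Y : point) : R := fst X * fst Y + snd X * snd Y.

Lemma norm2_dot X : norm2 X = dot X X.
Proof. unfold norm2, dot. ring. Qed.

Lemma cross3_cycle X Y Z : cross3 X Y Z = cross3 Y Z X.
Proof. unfold cross3. ring. Qed.

Lemma cross3_swap X Y Z : cross3 X Y Z = - cross3 X Z Y.
Proof. unfold cross3. ring. Qed.

Lemma sqdist_neq0 (a c : point) : a <> c -> (fst a - fst c) ^ 2 + (snd a - snd c) ^ 2 <> 0.
Proof.
  destruct a as [a1 a2], c as [c1 c2]; cbn [fst snd]; intros Hac E.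
  apply Hac. pose proof (pow2_ge_0 (a1 - c1)). pose proof (pow2_ge_0 (a2 - c2)).
  f_equal; nra.
Qed.

Lemma cross3_eq0_on_line (a X Y : point) : a <> X -> cross3 a X Y = 0 ->
  exists l, Y = (fst a + l * (fst X - fst a), snd a + l * (snd X - snd a)).
Proof.
  intros HaX Hc. pose proof (sqdist_neq0 X a (not_eq_sym HaX)) as HN.
  destruct a as [a1 a2], X as [x1 x2], Y as [y1 y2]; unfold cross3 in Hc; cbn [fst snd] in *.
  exists (((y1 - a1) * (x1 - a1) + (y2 - a2) * (x2 - a2)) / ((x1 - a1) ^ 2 + (x2 - a2) ^ 2)).
  pose proof (f_equal (Rmult (x1 - a1)) Hc). pose proof (f_equal (Rmult (x2 - a2)) Hc).
  f_equal; field_simplify_eq; auto; lra.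
Qed.

Lemma on_segment_cross3 X a b : on_segment X a b -> cross3 a b X = 0.
Proof. intros [s [_ ->]]. unfold cross3; cbn [fst snd]. ring. Qed.

Lemma inD_neq_onS1 b X : onS1 b -> inD X -> X <> b.
Proof. unfold onS1, inD. intros Hb HX ->. lra. Qed.

(* Equal to [|X - b|^2] for [b] on [S^1] (chord_den_sqdist); being affine in [b], it makes
   the remainder in cross3_chord_end_polynomial independent of [b]. *)
Definition chord_den (X b : point) : R := norm2 X + 1 - 2 * dot b X.
Definition chord_scale (X b : point) : R := 2 * (1 - dot b X) / chord_den X b.

(* The second intersection with [S^1] of the line from [b] through [X]. *)
Definition chord_end (X b : point) : point :=
  (fst b + chord_scale X b * (fst X - fst b), snd b + chord_scale X b * (snd X - snd b)).

Section Chord.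
Variables (b X : point).
Hypotheses (Hb : onS1 b) (HX : inD X).

Lemma chord_den_sqdist : chord_den X b = (fst X - fst b) ^ 2 + (snd X - snd b) ^ 2.
Proof. revert Hb. unfold chord_den, onS1, norm2, dot. intros Hb'. rewrite <- Hb'. ring. Qed.

Lemma chord_den_pos : 0 < chord_den X b.
Proof.
  rewrite chord_den_sqdist. pose proof (sqdist_neq0 _ _ (inD_neq_onS1 b X Hb HX)).
  pose proof (pow2_ge_0 (fst X - fst b)). pose proof (pow2_ge_0 (snd X - snd b)). lra.
Qed.

Lemma chord_scale_ge1 : 1 <= chord_scale X b.
Proof.
  pose proof chord_den_pos. unfold chord_scale.
  apply (Rmult_le_reg_r (chord_den X b)); auto. field_simplify; [|lra].
  unfold chord_den, inD in *. lra.
Qed.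

Lemma chord_end_onS1 : onS1 (chord_end X b).
Proof.
  pose proof chord_den_pos as HD. revert HD Hb.
  unfold chord_end, chord_scale, chord_den, onS1, norm2, dot.
  destruct b as [b1 b2], X as [x1 x2]; cbn [fst snd]; intros HD Hb'.
  field_simplify_eq; [|lra]. replace (b2 ^ 2) with (1 - b1 ^ 2) by lra. ring.
Qed.

Lemma chord_end_neq : chord_end X b <> b.
Proof.
  pose proof chord_scale_ge1. pose proof (sqdist_neq0 _ _ (inD_neq_onS1 b X Hb HX)) as HN.
  unfold chord_end. destruct b as [b1 b2], X as [x1 x2]; cbn [fst snd] in *.
  intros [= E1 E2]. apply HN.
  assert (x1 - b1 = 0) by (apply (Rmult_eq_reg_l (chord_scale (x1, x2) (b1, b2))); lra).
  assert (x2 - b2 = 0) by (apply (Rmult_eq_reg_l (chord_scale (x1, x2) (b1, b2))); lra).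
  nra.
Qed.

Lemma on_segment_chord_end : on_segment X (chord_end X b) b.
Proof.
  pose proof chord_scale_ge1.
  assert (0 < / chord_scale X b <= 1).
  { split; [apply Rinv_0_lt_compat; lra|]. rewrite <- Rinv_1. apply Rinv_le_contravar; lra. }
  exists (1 - / chord_scale X b). split; [lra|].
  unfold chord_end. destruct X as [x1 x2]; cbn [fst snd]. f_equal; field; lra.
Qed.

Lemma chord_end_unique z : onS1 z -> cross3 b X z = 0 -> z <> b -> z = chord_end X b.
Proof.
  intros Hz Hc Hzb. pose proof chord_den_pos as HD.
  destruct (cross3_eq0_on_line b X z (not_eq_sym (inD_neq_onS1 b X Hb HX)) Hc) as [l ->].
  assert (Hl : l <> 0) by (intros ->; apply Hzb; destruct b; cbn [fst snd]; f_equal; ring).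
  assert (Hquad : l * (l * chord_den X b - 2 * (1 - dot b X)) = 0).
  { revert Hb Hz. unfold chord_den, onS1, norm2, dot.
    destruct b as [b1 b2], X as [x1 x2]; cbn [fst snd]; intros Hb' Hz.
    pose proof (f_equal (Rmult l) Hb'). pose proof (f_equal (Rmult (l ^ 2)) Hb'). nra. }
  assert (Hscale : l = chord_scale X b).
  { unfold chord_scale. apply (Rmult_eq_reg_r (chord_den X b)); [|lra].
    field_simplify; [|lra]. apply Rmult_integral in Hquad. lra. }
  rewrite Hscale. reflexivity.
Qed.

End Chord.

Lemma chord_end_involutive b X : onS1 b -> inD X -> chord_end X (chord_end X b) = b.
Proof.
  intros Hb HX. symmetry. apply chord_end_unique; auto using chord_end_onS1.
  - rewrite cross3_swap, on_segment_cross3 by (apply on_segment_chord_end; auto). ring.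
  - apply not_eq_sym, chord_end_neq; auto.
Qed.

Lemma on_segment_sym X a b : on_segment X a b -> on_segment X b a.
Proof.
  intros [s [Hs ->]]. exists (1 - s). split; [lra|]. f_equal; ring.
Qed.

Lemma chord_on_segment a c X : onS1 a -> onS1 c -> a <> c -> inD X -> cross3 c a X = 0 ->
  on_segment X c a.
Proof.
  intros Ha Hc Hac HX Hx.
  destruct (cross3_eq0_on_line c a X (not_eq_sym Hac) Hx) as [l ->].
  pose proof (sqdist_neq0 _ _ Hac) as HN. revert Ha Hc HX HN.
  unfold onS1, inD, norm2. destruct a as [a1 a2], c as [c1 c2]; cbn [fst snd]. intros Ha Hc HX HN.
  assert (Hl : l * (l - 1) * ((a1 - c1) ^ 2 + (a2 - c2) ^ 2) < 0) by nra.
  exists l. split; [|reflexivity].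
  pose proof (pow2_ge_0 (a1 - c1)). pose proof (pow2_ge_0 (a2 - c2)).
  assert (l * (l - 1) < 0) by nra. split; nra.
Qed.

(* [apex_line P Q R0 b = 0] says that [R0] is on the line through [chord_end P b] and
   [chord_end Q b], once the degenerate factor [cross3 b P Q] is removed (cross3_chord_end). *)
Definition apex_dir (P Q R0 : point) : point :=
  ((1 - dot P Q) * fst R0 + dot P R0 * fst Q + dot Q R0 * fst P - fst P - fst Q,
   (1 - dot P Q) * snd R0 + dot P R0 * snd Q + dot Q R0 * snd P - snd P - snd Q).
Definition apex_const (P Q R0 : point) : R := 1 + dot P Q - dot P R0 - dot Q R0.
Definition apex_line (P Q R0 b : point) : R := apex_const P Q R0 + dot (apex_dir P Q R0) b.

Lemma cross3_chord_end_polynomial P Q R0 b :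
  2 * (1 - dot b Q) * chord_den P b * cross3 b Q R0
  - 2 * (1 - dot b P) * (2 * (1 - dot b Q)) * cross3 b Q P
  - 2 * (1 - dot b P) * chord_den Q b * cross3 b P R0
  = 2 * cross3 b P Q * apex_line P Q R0 b
    + 2 * (1 - dot P Q) * cross3 P Q R0 * (1 - norm2 b).
Proof.
  unfold chord_den, apex_line, apex_const, apex_dir, cross3, dot, norm2. cbn [fst snd]. ring.
Qed.

Lemma cross3_chord_end P Q R0 b : onS1 b -> inD P -> inD Q ->
  cross3 (chord_end P b) (chord_end Q b) R0 * (chord_den P b * chord_den Q b)
  = 2 * cross3 b P Q * apex_line P Q R0 b.
Proof.
  intros Hb HP HQ.
  pose proof (chord_den_pos b P Hb HP). pose proof (chord_den_pos b Q Hb HQ).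
  assert (HsP : chord_scale P b * chord_den P b = 2 * (1 - dot b P))
    by (unfold chord_scale; field; lra).
  assert (HsQ : chord_scale Q b * chord_den Q b = 2 * (1 - dot b Q))
    by (unfold chord_scale; field; lra).
  pose proof (cross3_chord_end_polynomial P Q R0 b) as Hpoly.
  unfold onS1 in Hb. rewrite <- HsP, <- HsQ, Hb, Rminus_diag, Rmult_0_r, Rplus_0_r in Hpoly.
  rewrite <- Hpoly. unfold chord_end, cross3. cbn [fst snd]. ring.
Qed.

Lemma ensemble_ext {U : Type} (A B : Ensemble U) : (forall x, A x <-> B x) -> A = B.
Proof.
  intros HAB. apply functional_extensionality. intros x.
  apply propositional_extensionality. apply HAB.
Qed.

Lemma cardinal_empty_ext {U : Type} (S : Ensemble U) :
  (forall x, ~ S x) -> cardinal U S 0.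
Proof.
  intros HS. replace S with (Empty_set U); [constructor|].
  apply ensemble_ext. intros x. split; [intros []|intros Hx; exfalso; exact (HS x Hx)].
Qed.

Lemma cardinal_singleton_ext {U : Type} (S : Ensemble U) x :
  (forall y, S y <-> y = x) -> cardinal U S 1.
Proof.
  intros HS. replace S with (Add U (Empty_set U) x).
  - constructor; [constructor|intros []].
  - apply ensemble_ext. intros y. rewrite HS. split.
    + intros Hy. apply Union_inv in Hy as [[]|Hy]. symmetry. apply Singleton_inv, Hy.
    + intros ->. right. constructor.
Qed.

Lemma cardinal_pair_ext {U : Type} (S : Ensemble U) x y : x <> y ->
  (forall z, S z <-> z = x \/ z = y) -> cardinal U S 2.
Proof.
  intros Hxy HS. replace S with (Add U (Add U (Empty_set U) x) y).
  - constructor; [constructor; [constructor|intros []]|].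
    intros Hy. apply Union_inv in Hy as [[]|Hy]. exact (Hxy (Singleton_inv _ _ _ Hy)).
  - apply ensemble_ext. intros z. rewrite HS. split.
    + intros Hz. apply Union_inv in Hz as [Hz|Hz]; [apply Union_inv in Hz as [[]|Hz]|];
        apply Singleton_inv in Hz; auto.
    + intros [->| ->]; [left; right|right]; constructor.
Qed.

Lemma line_circle_empty (L0 : R) (m b : point) : dot m m < L0 ^ 2 -> onS1 b -> L0 + dot m b <> 0.
Proof.
  destruct m as [m1 m2], b as [x y]. unfold onS1, norm2, dot; cbn [fst snd]. intros Hm Hb HL.
  assert (Lagrange : (m1*x + m2*y)^2 + (m2*x - m1*y)^2 = (m1^2 + m2^2) * (x^2 + y^2)) by ring.
  rewrite Hb in Lagrange. replace (m1*x + m2*y) with (- L0) in Lagrange by lra.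
  pose proof (pow2_ge_0 (m2*x - m1*y)). nra.
Qed.

Definition line_circle_point (L0 : R) (m : point) (s : R) : point :=
  ((- L0 * fst m + s * snd m) / dot m m, (- L0 * snd m - s * fst m) / dot m m).

Lemma line_circle_iff (L0 : R) (m b : point) : dot m m <> 0 ->
  onS1 b /\ L0 + dot m b = 0 <->
  exists s, s ^ 2 = dot m m - L0 ^ 2 /\ b = line_circle_point L0 m s.
Proof.
  intros Hm. unfold line_circle_point, onS1, norm2.
  destruct m as [m1 m2], b as [x y]. unfold dot in *; cbn [fst snd] in *. split.
  - intros [Hb HL]. exists (m2 * x - m1 * y).
    assert (Lagrange : (m1*x + m2*y)^2 + (m2*x - m1*y)^2 = (m1^2 + m2^2) * (x^2 + y^2)) by ring.
    rewrite Hb in Lagrange. replace (m1*x + m2*y) with (- L0) in Lagrange by lra.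
    split; [lra|]. f_equal; field_simplify_eq; auto; replace L0 with (- (m1*x + m2*y)) by lra; ring.
  - intros (s & Hs & [= -> ->]). split.
    + field_simplify_eq; auto. rewrite Hs. ring.
    + field. auto.
Qed.

Lemma line_circle_point_inj (L0 : R) (m : point) s1 s2 : dot m m <> 0 ->
  line_circle_point L0 m s1 = line_circle_point L0 m s2 -> s1 = s2.
Proof.
  intros Hm E.
  assert (Hs : forall s,
    fst m * snd (line_circle_point L0 m s) - snd m * fst (line_circle_point L0 m s) = - s).
  { intros s. unfold line_circle_point, dot in *. cbn [fst snd]. field. auto. }
  pose proof (Hs s1) as H1. rewrite E, Hs in H1. lra.
Qed.

Lemma chord_end_eq_iff b P Q : onS1 b -> inD P -> inD Q ->
  chord_end P b = chord_end Q b <-> cross3 b P Q = 0.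
Proof.
  intros Hb HP HQ.
  assert (HbP : cross3 b P (chord_end P b) = 0)
    by (rewrite <- cross3_cycle; apply on_segment_cross3, on_segment_chord_end; auto).
  assert (HbQ : cross3 b Q (chord_end Q b) = 0)
    by (rewrite <- cross3_cycle; apply on_segment_cross3, on_segment_chord_end; auto).
  split.
  - intros Ea. rewrite <- Ea in HbQ.
    destruct (cross3_eq0_on_line b (chord_end P b) P) as [l HlP].
    { apply not_eq_sym, chord_end_neq; auto. }
    { rewrite cross3_swap, HbP. ring. }
    destruct (cross3_eq0_on_line b (chord_end P b) Q) as [l' HlQ].
    { apply not_eq_sym, chord_end_neq; auto. }
    { rewrite cross3_swap, HbQ. ring. }
    rewrite HlP, HlQ. unfold cross3. cbn [fst snd]. ring.
  - intros HPQ. symmetry. apply chord_end_unique; auto using chord_end_onS1, chord_end_neq.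
    destruct (cross3_eq0_on_line b Q P) as [l ->].
    { apply not_eq_sym, inD_neq_onS1; auto. }
    { rewrite cross3_swap, HPQ. ring. }
    revert HbQ. unfold cross3. cbn [fst snd]. intros HbQ.
    transitivity (l * ((fst Q - fst b) * (snd (chord_end Q b) - snd b) -
      (snd Q - snd b) * (fst (chord_end Q b) - fst b))); [ring|rewrite HbQ; ring].
Qed.

Definition chord_triangle (P Q b : point) : Ensemble point :=
  fun x => x = chord_end P b \/ x = b \/ x = chord_end Q b.

Definition apex_disc (P Q R0 : point) : R :=
  dot (apex_dir P Q R0) (apex_dir P Q R0) - apex_const P Q R0 ^ 2.

Section Triangles.
Variables (P Q R0 : point).
Hypotheses (HP : inD P) (HQ : inD Q) (HR : inD R0).
Hypothesis apex_line_off_chord :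
  forall b, onS1 b -> cross3 b P Q = 0 -> apex_line P Q R0 b <> 0.

Lemma apex_chord_end_neq b : onS1 b -> apex_line P Q R0 b = 0 -> chord_end P b <> chord_end Q b.
Proof.
  intros Hb HL Ee. apply (apex_line_off_chord b Hb); auto.
  apply chord_end_eq_iff; auto.
Qed.

Lemma circumscribing_triangle_apex T : circumscribing_triangle P Q R0 T ->
  exists b, onS1 b /\ apex_line P Q R0 b = 0 /\ T = chord_triangle P Q b.
Proof.
  intros (a & b & c & Ha & Hb & Hc & Hab & Hbc & Hac & HT & SP & SQ & SR).
  assert (Ea : a = chord_end P b).
  { apply chord_end_unique; auto. rewrite <- cross3_cycle. apply on_segment_cross3; auto. }
  assert (Ec : c = chord_end Q b).
  { apply chord_end_unique; auto. rewrite cross3_swap, on_segment_cross3 by auto. ring. }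
  exists b. split; [exact Hb|]. split.
  - pose proof (cross3_chord_end P Q R0 b Hb HP HQ) as Hfac.
    rewrite <- Ea, <- Ec, cross3_cycle, cross3_swap, on_segment_cross3, Ropp_0, Rmult_0_l in Hfac
      by exact SR.
    assert (Hcross : cross3 b P Q <> 0).
    { rewrite <- chord_end_eq_iff, <- Ea, <- Ec; auto. }
    symmetry in Hfac. apply Rmult_integral in Hfac as [Hfac|Hfac]; lra.
  - apply ensemble_ext. intros x. unfold chord_triangle. rewrite HT, <- Ea, <- Ec. tauto.
Qed.

Lemma chord_triangle_circumscribing b : onS1 b -> apex_line P Q R0 b = 0 ->
  circumscribing_triangle P Q R0 (chord_triangle P Q b).
Proof.
  intros Hb HL.
  assert (Hcross : cross3 b P Q <> 0) by (intros Hc; exact (apex_line_off_chord b Hb Hc HL)).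
  assert (Hac : chord_end P b <> chord_end Q b) by (apply apex_chord_end_neq; auto).
  exists (chord_end P b), b, (chord_end Q b).
  repeat split; auto using chord_end_onS1, chord_end_neq.
  - intros Ecb. apply (chord_end_neq b Q); auto.
  - apply on_segment_chord_end; auto.
  - apply on_segment_sym, on_segment_chord_end; auto.
  - apply chord_on_segment; auto using chord_end_onS1.
    pose proof (cross3_chord_end P Q R0 b Hb HP HQ) as Hfac.
    rewrite HL, Rmult_0_r in Hfac.
    pose proof (chord_den_pos b P Hb HP). pose proof (chord_den_pos b Q Hb HQ).
    rewrite cross3_cycle, cross3_swap. apply Rmult_integral in Hfac as [Hfac|Hfac]; [lra|nra].
Qed.

Lemma circumscribing_triangle_iff T : circumscribing_triangle P Q R0 T <->
  exists b, onS1 b /\ apex_line P Q R0 b = 0 /\ T = chord_triangle P Q b.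
Proof.
  split; [apply circumscribing_triangle_apex|].
  intros (b & Hb & HL & ->). apply chord_triangle_circumscribing; auto.
Qed.

Lemma chord_triangle_inj b1 b2 : onS1 b1 -> onS1 b2 ->
  apex_line P Q R0 b1 = 0 -> apex_line P Q R0 b2 = 0 ->
  chord_triangle P Q b1 = chord_triangle P Q b2 -> b1 = b2.
Proof.
  intros Hb1 Hb2 HL1 HL2 ET.
  pose proof (apex_chord_end_neq b2 Hb2 HL2) as Hac2.
  assert (Hin : forall x, chord_triangle P Q b2 x -> chord_triangle P Q b1 x) by (rewrite ET; auto).
  destruct (Hin b2) as [Ea|[Eb|Ec]]; [unfold chord_triangle; auto| | auto |].
  - assert (Eb1 : chord_end P b2 = b1) by (rewrite Ea; apply chord_end_involutive; auto).
    destruct (Hin (chord_end Q b2)) as [E|[E|E]]; [unfold chord_triangle; auto| | |].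
    + exfalso. apply (chord_end_neq b2 Q); congruence.
    + exfalso. apply Hac2. congruence.
    + rewrite <- (chord_end_involutive b1 Q), <- E, chord_end_involutive; auto.
  - assert (Eb1 : chord_end Q b2 = b1) by (rewrite Ec; apply chord_end_involutive; auto).
    destruct (Hin (chord_end P b2)) as [E|[E|E]]; [unfold chord_triangle; auto| | |].
    + rewrite <- (chord_end_involutive b1 P), <- E, chord_end_involutive; auto.
    + exfalso. apply Hac2. congruence.
    + exfalso. apply (chord_end_neq b2 P); congruence.
Qed.

Lemma circumscribing_triangle_card0 : apex_disc P Q R0 < 0 ->
  cardinal _ (circumscribing_triangle P Q R0) 0.
Proof.
  intros Hd. apply cardinal_empty_ext. intros T HT.
  apply circumscribing_triangle_iff in HT as (b & Hb & HL & _).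
  apply (line_circle_empty (apex_const P Q R0) (apex_dir P Q R0) b); auto.
  unfold apex_disc in Hd. lra.
Qed.

Lemma apex_dir_nonzero : (exists b0, onS1 b0 /\ cross3 b0 P Q = 0) ->
  apex_disc P Q R0 = 0 -> dot (apex_dir P Q R0) (apex_dir P Q R0) <> 0.
Proof.
  intros (b0 & Hb0 & Hc0) Hd Hm. apply (apex_line_off_chord b0 Hb0 Hc0).
  unfold apex_disc in Hd. rewrite Hm in Hd. unfold apex_line, dot in *.
  assert (apex_const P Q R0 = 0) by nra.
  assert (fst (apex_dir P Q R0) = 0) by nra. assert (snd (apex_dir P Q R0) = 0) by nra.
  nra.
Qed.

Lemma circumscribing_triangle_card1 : (exists b0, onS1 b0 /\ cross3 b0 P Q = 0) ->
  apex_disc P Q R0 = 0 -> cardinal _ (circumscribing_triangle P Q R0) 1.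
Proof.
  intros Hb0 Hd. pose proof (apex_dir_nonzero Hb0 Hd) as Hm. unfold apex_disc in Hd.
  set (b1 := line_circle_point (apex_const P Q R0) (apex_dir P Q R0) 0).
  assert (Hb1 : onS1 b1 /\ apex_line P Q R0 b1 = 0).
  { apply line_circle_iff; auto. exists 0. split; [lra|reflexivity]. }
  apply (cardinal_singleton_ext _ (chord_triangle P Q b1)). intros T.
  rewrite circumscribing_triangle_iff. split.
  - intros (b & Hb & HL & ->).
    destruct (proj1 (line_circle_iff _ _ b Hm) (conj Hb HL)) as (s & Hs & ->).
    replace s with 0 by nra. reflexivity.
  - intros ->. exists b1. tauto.
Qed.

Lemma circumscribing_triangle_card2 : 0 < apex_disc P Q R0 ->
  cardinal _ (circumscribing_triangle P Q R0) 2.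
Proof.
  intros Hd. unfold apex_disc in Hd.
  set (L0 := apex_const P Q R0) in *. set (m := apex_dir P Q R0) in *.
  assert (Hm : dot m m <> 0) by (pose proof (pow2_ge_0 L0); lra).
  set (s := sqrt (dot m m - L0 ^ 2)).
  assert (Hs : s ^ 2 = dot m m - L0 ^ 2) by (apply pow2_sqrt; lra).
  assert (Hs0 : 0 < s) by (apply sqrt_lt_R0; lra).
  set (bp := line_circle_point L0 m s). set (bm := line_circle_point L0 m (- s)).
  assert (Hbp : onS1 bp /\ apex_line P Q R0 bp = 0) by (apply line_circle_iff; eauto).
  assert (Hbm : onS1 bm /\ apex_line P Q R0 bm = 0).
  { apply line_circle_iff; auto. exists (- s).
    split; [replace ((- s) ^ 2) with (s ^ 2) by ring; exact Hs|reflexivity]. }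
  apply (cardinal_pair_ext _ (chord_triangle P Q bp) (chord_triangle P Q bm)).
  - intros E. apply chord_triangle_inj in E; try tauto.
    apply line_circle_point_inj in E; auto. lra.
  - intros T. rewrite circumscribing_triangle_iff. split.
    + intros (b & Hb & HL & ->).
      destruct (proj1 (line_circle_iff _ _ b Hm) (conj Hb HL)) as (s' & Hs' & ->).
      change (s' ^ 2 = dot m m - L0 ^ 2) in Hs'.
      assert (Hsq : (s' - s) * (s' + s) = 0) by nra.
      apply Rmult_integral in Hsq as [Hsq|Hsq]; [left|right];
        unfold bp, bm; do 2 f_equal; lra.
    + intros [-> | ->]; [exists bp|exists bm]; tauto.
Qed.

Lemma circumscribing_triangle_count (F c : R) : 0 < c -> apex_disc P Q R0 = c * (F - 1) ->
  (exists b0, onS1 b0 /\ cross3 b0 P Q = 0) ->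
  (F < 1 -> cardinal _ (circumscribing_triangle P Q R0) 0) /\
  (F = 1 -> cardinal _ (circumscribing_triangle P Q R0) 1) /\
  (~ F < 1 -> F <> 1 -> cardinal _ (circumscribing_triangle P Q R0) 2).
Proof.
  intros Hc Hd Hb0. split; [|split].
  - intros HF. apply circumscribing_triangle_card0. rewrite Hd. nra.
  - intros HF. apply circumscribing_triangle_card1; auto. rewrite Hd, HF. ring.
  - intros HF HF'. apply circumscribing_triangle_card2. rewrite Hd.
    assert (1 < F) by lra. nra.
Qed.

End Triangles.

Definition frame (t3 : R) (X : point) : point := (coord1 t3 X, coord2 t3 X).

Section Frame.
Variable t3 : R.
Let c := cos (2 * PI * t3).
Let s := sin (2 * PI * t3).

Lemma frame_rot X : frame t3 X = (fst X * c + snd X * s, - fst X * s + snd X * c).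
Proof.
  unfold frame, coord1, coord2, circ; cbn [fst snd]. f_equal.
  replace (2 * PI * (t3 + / 4)) with (2 * PI * t3 + PI / 2) by field.
  rewrite cos_plus, sin_plus, cos_PI2, sin_PI2. fold c s. ring.
Qed.

Let Hcs : c ^ 2 + s ^ 2 = 1.
Proof. pose proof (sin2_cos2 (2 * PI * t3)) as H. unfold Rsqr in H. unfold c, s. lra. Qed.

Lemma dot_frame X Y : dot (frame t3 X) (frame t3 Y) = dot X Y.
Proof.
  rewrite !frame_rot. unfold dot; cbn [fst snd].
  transitivity ((c ^ 2 + s ^ 2) * (fst X * fst Y + snd X * snd Y)); [ring|rewrite Hcs; ring].
Qed.

Lemma norm2_frame X : norm2 (frame t3 X) = norm2 X.
Proof. rewrite !norm2_dot. apply dot_frame. Qed.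

Lemma coord1_sq_lt_1 X : inD X -> coord1 t3 X ^ 2 < 1.
Proof.
  unfold inD. rewrite <- norm2_frame. unfold norm2, frame; cbn [fst snd].
  pose proof (pow2_ge_0 (coord2 t3 X)). lra.
Qed.

Lemma cross3_frame X Y Z : cross3 (frame t3 X) (frame t3 Y) (frame t3 Z) = cross3 X Y Z.
Proof.
  rewrite !frame_rot. unfold cross3; cbn [fst snd].
  transitivity ((c ^ 2 + s ^ 2) * cross3 X Y Z); unfold cross3; [ring|rewrite Hcs; ring].
Qed.

Lemma dist_frame X Y : Defs.dist (frame t3 X) (frame t3 Y) = Defs.dist X Y.
Proof.
  rewrite !frame_rot. unfold Defs.dist; cbn [fst snd]. f_equal.
  transitivity ((c ^ 2 + s ^ 2) * ((fst X - fst Y) ^ 2 + (snd X - snd Y) ^ 2));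
    [ring|rewrite Hcs; ring].
Qed.

Lemma frame_apex_dir P Q R0 :
  frame t3 (apex_dir P Q R0) = apex_dir (frame t3 P) (frame t3 Q) (frame t3 R0).
Proof.
  unfold apex_dir at 2. rewrite !dot_frame, !frame_rot.
  unfold apex_dir; cbn [fst snd]. f_equal; ring.
Qed.

Lemma apex_line_frame P Q R0 b :
  apex_line (frame t3 P) (frame t3 Q) (frame t3 R0) (frame t3 b) = apex_line P Q R0 b.
Proof. unfold apex_line, apex_const. rewrite <- frame_apex_dir, !dot_frame. reflexivity. Qed.

Lemma apex_disc_frame P Q R0 :
  apex_disc (frame t3 P) (frame t3 Q) (frame t3 R0) = apex_disc P Q R0.
Proof. unfold apex_disc, apex_const. rewrite <- frame_apex_dir, !dot_frame. reflexivity. Qed.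

Lemma dprime_frame a b P Q :
  dprime (frame t3 a) (frame t3 b) (frame t3 P) (frame t3 Q) = dprime a b P Q.
Proof. unfold dprime. rewrite !dist_frame. reflexivity. Qed.

Lemma frame_circ t : frame t3 (circ t) = circ (t - t3).
Proof.
  rewrite frame_rot. unfold circ, c, s; cbn [fst snd].
  replace (2 * PI * (t - t3)) with (2 * PI * t - 2 * PI * t3) by ring.
  rewrite cos_minus, sin_minus. f_equal; ring.
Qed.

End Frame.

Lemma circ_onS1 t : onS1 (circ t).
Proof.
  unfold onS1, norm2, circ; cbn [fst snd].
  pose proof (sin2_cos2 (2 * PI * t)) as H. unfold Rsqr in H. lra.
Qed.

Lemma circ_shift_Z t (n : Z) : circ (t + IZR n) = circ t.
Proof.
  assert (Hs : sin (IZR n * PI) = 0) by (apply sin_eq_0_1; eauto).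
  unfold circ. replace (2 * PI * (t + IZR n)) with (2 * PI * t + 2 * (IZR n * PI)) by ring.
  rewrite cos_plus, sin_plus, cos_2a_sin, sin_2a, Hs. f_equal; ring.
Qed.

Lemma circ_opp t : circ (- t) = (fst (circ t), - snd (circ t)).
Proof.
  unfold circ; cbn [fst snd]. replace (2 * PI * - t) with (- (2 * PI * t)) by ring.
  rewrite cos_neg, sin_neg. reflexivity.
Qed.

Lemma snd_circ_neq0 t : (exists n : Z, 0 < 2 * t + IZR n <= / 2) -> snd (circ t) <> 0.
Proof.
  intros [n Hn] Hsin. unfold circ in Hsin; cbn [snd] in Hsin.
  apply sin_eq_0_0 in Hsin as [k Hk].
  assert (Hz : 2 * t + IZR n = IZR (k + n)).
  { rewrite plus_IZR. apply (Rmult_eq_reg_l PI); [|exact PI_neq0]. lra. }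
  rewrite Hz in Hn. destruct Hn as [H0 H1].
  apply lt_IZR in H0. assert (IZR (k + n) < IZR 1) by lra. apply lt_IZR in H. lia.
Qed.

Lemma chord_frame t1 t2 t3 :
  (exists n : Z, 0 < t1 - t2 + IZR n <= / 2) -> (exists n : Z, 2 * t3 = t1 + t2 + IZR n) ->
  exists v w, w <> 0 /\ frame t3 (circ t1) = (v, w) /\ frame t3 (circ t2) = (v, - w).
Proof.
  intros [n1 Hn1] [n Hn]. rewrite !frame_circ.
  exists (fst (circ (t1 - t3))), (snd (circ (t1 - t3))). split; [|split].
  - apply snd_circ_neq0. exists (n1 + n)%Z. rewrite plus_IZR. lra.
  - apply surjective_pairing.
  - rewrite <- circ_opp, <- (circ_shift_Z (- (t1 - t3)) (- n)), opp_IZR. f_equal. lra.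
Qed.

Lemma coord1_on_vertical_chord t3 a b X v w : frame t3 a = (v, w) -> frame t3 b = (v, - w) ->
  w <> 0 -> collinear a b X -> coord1 t3 X = v.
Proof.
  unfold collinear. intros Ha Hb Hw HX. rewrite <- (cross3_frame t3), Ha, Hb in HX.
  unfold frame, cross3 in HX; cbn [fst snd] in HX.
  assert (Hprod : (- 2 * w) * (coord1 t3 X - v) = 0) by lra.
  apply Rmult_integral in Hprod as [Hprod|Hprod]; lra.
Qed.

Lemma apex_line_vertical_chord u y p q r t : u ^ 2 + y ^ 2 = 1 ->
  apex_line (u, p) (u, q) (r, t) (u, y) = (p - y) * (q - y) * (1 + t * y - u * r).
Proof.
  intros Huy.
  transitivity ((p - y) * (q - y) * (1 + t * y - u * r)
    + (u ^ 2 + y ^ 2 - 1) * (u * r + p * t + q * t - t * y - 1)).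
  - unfold apex_line, apex_const, apex_dir, dot; cbn [fst snd]. ring.
  - rewrite Huy. ring.
Qed.

Lemma apex_line_vertical_chord_neq u y p q r t : u ^ 2 + y ^ 2 = 1 ->
  u ^ 2 + p ^ 2 < 1 -> u ^ 2 + q ^ 2 < 1 -> r ^ 2 + t ^ 2 < 1 ->
  apex_line (u, p) (u, q) (r, t) (u, y) <> 0.
Proof.
  intros Huy HP HQ HR. rewrite apex_line_vertical_chord by exact Huy.
  assert (p <> y) by (intros ->; lra). assert (q <> y) by (intros ->; lra).
  assert (Lagrange : (u*r - t*y)^2 + (u*t + y*r)^2 = (u^2 + y^2) * (r^2 + t^2)) by ring.
  rewrite Huy in Lagrange. pose proof (pow2_ge_0 (u*t + y*r)).
  assert ((u*r - t*y)^2 < 1) by lra. assert (1 + t*y - u*r <> 0) by nra.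
  repeat apply Rmult_integral_contrapositive_currified; lra.
Qed.

Lemma apex_line_off_vertical_chord t3 P Q R0 :
  coord1 t3 P = coord1 t3 Q -> coord2 t3 P <> coord2 t3 Q -> inD P -> inD Q -> inD R0 ->
  forall b, onS1 b -> cross3 b P Q = 0 -> apex_line P Q R0 b <> 0.
Proof.
  unfold inD, onS1. intros HPQ1 HPQ2 HP HQ HR b Hb Hc.
  rewrite <- (apex_line_frame t3). rewrite <- (cross3_frame t3) in Hc.
  rewrite <- (norm2_frame t3) in HP, HQ, HR, Hb. unfold frame in *. rewrite <- HPQ1 in *.
  unfold cross3, norm2 in *; cbn [fst snd] in *.
  assert (Hx : coord1 t3 b = coord1 t3 P).
  { assert (Hprod : (coord1 t3 P - coord1 t3 b) * (coord2 t3 Q - coord2 t3 P) = 0) by lra.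
    apply Rmult_integral in Hprod as [Hprod|Hprod]; lra. }
  rewrite Hx in *. apply apex_line_vertical_chord_neq; auto.
Qed.

Definition ell_form (K u x1 x2 : R) : R :=
  (x1 - (K - 4) * u / (K - 4 * u ^ 2)) ^ 2 / (4 * K * (1 - u ^ 2) ^ 2 / (K - 4 * u ^ 2) ^ 2)
  + x2 ^ 2 / (K * (1 - u ^ 2) / (K - 4 * u ^ 2)).

Section EllForm.
Variables K u : R.
Hypotheses (HK : 4 <= K) (Hu : u ^ 2 < 1).

Lemma one_sub_norm2_ell_form x1 x2 :
  1 - x1 ^ 2 - x2 ^ 2
  = (K - 4) / (4 * (1 - u ^ 2)) * (x1 - u) ^ 2
    + K * (1 - u ^ 2) / (K - 4 * u ^ 2) * (1 - ell_form K u x1 x2).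
Proof.
  unfold ell_form. assert (K - 4 * u ^ 2 <> 0) by nra. field. repeat split; lra.
Qed.

Lemma ell_form_eq1_le x1 x2 : ell_form K u x1 x2 = 1 -> x1 ^ 2 + x2 ^ 2 <= 1.
Proof.
  intros HE. pose proof (one_sub_norm2_ell_form x1 x2) as Hid. rewrite HE in Hid.
  assert (0 <= (K - 4) / (4 * (1 - u ^ 2)) * (x1 - u) ^ 2).
  { apply Rmult_le_pos; [|apply pow2_ge_0].
    apply Rmult_le_pos; [lra|]. left. apply Rinv_0_lt_compat. lra. }
  lra.
Qed.

Lemma ell_form_tangent w : w ^ 2 = 1 - u ^ 2 ->
  ell_form K u u w = 1 /\
  2 * (u - (K - 4) * u / (K - 4 * u ^ 2)) / (4 * K * (1 - u ^ 2) ^ 2 / (K - 4 * u ^ 2) ^ 2) * w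
    - 2 * w / (K * (1 - u ^ 2) / (K - 4 * u ^ 2)) * u = 0.
Proof.
  intros Hw. unfold ell_form.
  assert (K - 4 * u ^ 2 <> 0) by nra. assert (w <> 0) by (intros ->; nra).
  split; [rewrite Hw|]; field; repeat split; lra.
Qed.

End EllForm.

Lemma apex_disc_vertical_chord u p q r t :
  let N := 4 * (1 - u ^ 2 - p * q) ^ 2 in
  let D := (1 - u ^ 2 - p ^ 2) * (1 - u ^ 2 - q ^ 2) in
  0 < 1 - u ^ 2 - p ^ 2 -> 0 < 1 - u ^ 2 - q ^ 2 -> N / D - 4 * u ^ 2 <> 0 ->
  apex_disc (u, p) (u, q) (r, t) * (N / D - 4 * u ^ 2)
  = N * (1 - u ^ 2) * (ell_form (N / D) u r t - 1).
Proof.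
  intros N D HP HQ HND.
  assert (HD : N - 4 * u ^ 2 * D <> 0).
  { replace (N - 4 * u ^ 2 * D) with ((N / D - 4 * u ^ 2) * D) by (unfold D; field; split; lra).
    apply Rmult_integral_contrapositive_currified; [exact HND|unfold D; nra]. }
  unfold apex_disc, apex_const, apex_dir, dot, ell_form, N, D in *; cbn [fst snd].
  field. repeat split; nra.
Qed.

(* [ellK k = (k + 1/k)^2]; the parameters [A^2], [B^2], [C] depend on [k] only through it. *)
Definition ellK (k : R) : R := (k ^ 2 + 1) ^ 2 / k ^ 2.

Lemma ellK_exp_half_abs_ln rho : 0 < rho -> ellK (exp (/ 2 * Rabs (ln rho))) = rho + / rho + 2.
Proof.
  intros Hrho.
  assert (Hk2 : exp (/ 2 * Rabs (ln rho)) ^ 2 = exp (Rabs (ln rho))).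
  { rewrite <- Rsqr_pow2. unfold Rsqr. rewrite <- exp_plus. f_equal. field. }
  unfold ellK. rewrite Hk2. pose proof (exp_pos (Rabs (ln rho))).
  destruct (Rle_dec 0 (ln rho)).
  - rewrite Rabs_right, exp_ln by lra. field. lra.
  - rewrite Rabs_left, exp_Ropp, exp_ln by lra. field. lra.
Qed.

Lemma sqrt_vertical_sq v a : sqrt ((v - v) ^ 2 + a ^ 2) = Rabs a.
Proof.
  replace ((v - v) ^ 2 + a ^ 2) with (Rabs a ^ 2).
  - apply sqrt_pow2, Rabs_pos.
  - rewrite <- Rsqr_pow2, <- Rsqr_abs, Rsqr_pow2. ring.
Qed.

Lemma ellK_dprime_vertical u w p q : p ^ 2 < w ^ 2 -> q ^ 2 < w ^ 2 ->
  ellK (exp (dprime (u, w) (u, - w) (u, p) (u, q)))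
  = 4 * (w ^ 2 - p * q) ^ 2 / ((w ^ 2 - p ^ 2) * (w ^ 2 - q ^ 2)).
Proof.
  intros Hp Hq. unfold dprime, Defs.dist; cbn [fst snd]. rewrite !sqrt_vertical_sq.
  set (X := (w - q) * (w + p)). set (Y := (w - p) * (w + q)).
  assert (HXY : 0 < X * Y).
  { unfold X, Y. replace ((w - q) * (w + p) * ((w - p) * (w + q)))
      with ((w ^ 2 - p ^ 2) * (w ^ 2 - q ^ 2)) by ring. nra. }
  assert (Hpos : 0 < X / Y).
  { assert (HY : Y <> 0) by (intros E; rewrite E in HXY; lra).
    replace (X / Y) with (X * Y / Y ^ 2) by (field; exact HY).
    apply Rdiv_lt_0_compat; [exact HXY|]. nra. }
  assert (Hrho : Rabs (w - q) * Rabs (- w - p) / (Rabs (w - p) * Rabs (- w - q)) = X / Y).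
  { replace (- w - p) with (- (w + p)) by ring. replace (- w - q) with (- (w + q)) by ring.
    rewrite !Rabs_Ropp, <- !Rabs_mult. fold X Y. unfold Rdiv.
    rewrite <- Rabs_inv, <- Rabs_mult. apply Rabs_right. left. exact Hpos. }
  rewrite Hrho, ellK_exp_half_abs_ln by exact Hpos.
  unfold X, Y. field. repeat split; nra.
Qed.

Section Ellipse.
Variables k u : R.
Hypotheses (Hk : 0 < k) (Hu : u ^ 2 < 1).

Lemma ellK_ge4 : 4 <= ellK k.
Proof.
  unfold ellK. assert (0 < k ^ 2) by nra.
  replace ((k ^ 2 + 1) ^ 2 / k ^ 2) with (4 + (k ^ 2 - 1) ^ 2 / k ^ 2) by (field; lra).
  assert (0 <= (k ^ 2 - 1) ^ 2 / k ^ 2)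
    by (apply Rmult_le_pos; [apply pow2_ge_0|left; apply Rinv_0_lt_compat; lra]).
  lra.
Qed.

Lemma ellK_sub : ellK k - 4 * u ^ 2 = (k ^ 2 - 2 * k * u + 1) * (k ^ 2 + 2 * k * u + 1) / k ^ 2.
Proof. unfold ellK. field. lra. Qed.

Lemma ell_den_pos : 0 < (k ^ 2 - 2 * k * u + 1) * (k ^ 2 + 2 * k * u + 1).
Proof.
  replace ((k ^ 2 - 2 * k * u + 1) * (k ^ 2 + 2 * k * u + 1))
    with ((k ^ 2 - 1) ^ 2 + 4 * k ^ 2 * (1 - u ^ 2)) by ring.
  pose proof (pow2_ge_0 (k ^ 2 - 1)). assert (0 < k ^ 2) by nra. nra.
Qed.

Lemma ell_den_factors : k ^ 2 - 2 * k * u + 1 <> 0 /\ k ^ 2 + 2 * k * u + 1 <> 0.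
Proof. pose proof ell_den_pos as Hpos. split; intros Z; rewrite Z in Hpos; lra. Qed.

Lemma ellA_sq : ellA k u ^ 2 = 4 * ellK k * (1 - u ^ 2) ^ 2 / (ellK k - 4 * u ^ 2) ^ 2.
Proof.
  pose proof ell_den_pos. destruct ell_den_factors. rewrite ellK_sub.
  unfold ellA, ellK. field. repeat split; lra.
Qed.

Lemma ellB_sq : ellB k u ^ 2 = ellK k * (1 - u ^ 2) / (ellK k - 4 * u ^ 2).
Proof.
  pose proof ell_den_pos. destruct ell_den_factors. rewrite ellK_sub.
  unfold ellB, ellK, Rdiv. rewrite !Rpow_mult_distr, pow_inv, !pow2_sqrt by lra.
  field. repeat split; lra.
Qed.

Lemma ellC_ellK : ellC k u = (ellK k - 4) * u / (ellK k - 4 * u ^ 2).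
Proof.
  pose proof ell_den_pos. destruct ell_den_factors. rewrite ellK_sub.
  unfold ellC, ellK. field. repeat split; lra.
Qed.

Lemma ellF_ell_form t3 X :
  ellF t3 (ellA k u) (ellB k u) (ellC k u) X = ell_form (ellK k) u (coord1 t3 X) (coord2 t3 X).
Proof. unfold ellF. rewrite ellA_sq, ellB_sq, ellC_ellK. reflexivity. Qed.

Lemma ellipse_in_closed_disk t3 X :
  ellF t3 (ellA k u) (ellB k u) (ellC k u) X = 1 -> inD X \/ onS1 X.
Proof.
  rewrite ellF_ell_form. intros HE.
  pose proof (ell_form_eq1_le _ _ ellK_ge4 Hu _ _ HE) as Hle.
  unfold inD, onS1. rewrite <- (norm2_frame t3). unfold norm2, frame; cbn [fst snd]. lra.
Qed.

Lemma ellipse_tangent_vertical t3 T w : onS1 T -> frame t3 T = (u, w) ->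
  ellipse_tangent_S1_at t3 (ellA k u) (ellB k u) (ellC k u) T.
Proof.
  intros HT HTw. assert (Hw : w ^ 2 = 1 - u ^ 2).
  { unfold onS1 in HT. rewrite <- (norm2_frame t3), HTw in HT. unfold norm2 in HT. cbn in HT. lra. }
  unfold frame in HTw. injection HTw as H1 H2.
  destruct (ell_form_tangent _ _ ellK_ge4 Hu w Hw) as [Hon Htan].
  unfold ellipse_tangent_S1_at. rewrite ellF_ell_form, ellA_sq, ellB_sq, ellC_ellK, H1, H2. auto.
Qed.

End Ellipse.

Section VerticalChord.
Variables (t3 u w : R) (T1 T2 P Q R0 : point).
Hypotheses (HT1 : frame t3 T1 = (u, w)) (HT2 : frame t3 T2 = (u, - w)) (HT1S : onS1 T1)
  (HPu : coord1 t3 P = u) (HQu : coord1 t3 Q = u) (HP : inD P) (HQ : inD Q).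

Lemma apex_disc_ellF :
  let k := exp (dprime T1 T2 P Q) in
  exists c, 0 < c /\
    apex_disc P Q R0 = c * (ellF t3 (ellA k u) (ellB k u) (ellC k u) R0 - 1).
Proof.
  intros k.
  unfold onS1, inD in *. rewrite <- (norm2_frame t3) in HT1S, HP, HQ.
  rewrite HT1 in HT1S. unfold frame in HP, HQ. rewrite HPu in HP. rewrite HQu in HQ.
  unfold norm2 in *; cbn [fst snd] in *.
  set (p := coord2 t3 P) in *. set (q := coord2 t3 Q) in *.
  set (N := 4 * (1 - u ^ 2 - p * q) ^ 2). set (D := (1 - u ^ 2 - p ^ 2) * (1 - u ^ 2 - q ^ 2)).
  assert (HK : ellK k = N / D).
  { unfold k. rewrite <- (dprime_frame t3), HT1, HT2. unfold frame. rewrite HPu, HQu.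
    fold p q. rewrite ellK_dprime_vertical by lra.
    unfold N, D. replace (1 - u ^ 2) with (w ^ 2) by lra.
    reflexivity. }
  assert (Hk : 0 < k) by apply exp_pos.
  assert (Hu : u ^ 2 < 1) by (pose proof (pow2_ge_0 p); lra).
  pose proof (ellK_sub k u Hk) as HKsub. pose proof (ell_den_pos k u Hk Hu).
  assert (HKpos : 0 < ellK k - 4 * u ^ 2).
  { rewrite HKsub. apply Rdiv_lt_0_compat; nra. }
  exists (N * (1 - u ^ 2) / (ellK k - 4 * u ^ 2)). split.
  - apply Rdiv_lt_0_compat; [|exact HKpos]. apply Rmult_lt_0_compat; [|lra].
    unfold N. assert (0 < 1 - u ^ 2 - p * q) by nra. nra.
  - rewrite ellF_ell_form by auto. rewrite <- (apex_disc_frame t3).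
    unfold frame. rewrite HPu, HQu. fold p q.
    pose proof (apex_disc_vertical_chord u p q (coord1 t3 R0) (coord2 t3 R0)) as Hdisc.
    cbv zeta in Hdisc. fold N D in Hdisc. rewrite <- HK in Hdisc.
    apply (Rmult_eq_reg_r (ellK k - 4 * u ^ 2)); [|lra].
    rewrite Hdisc by lra. field. lra.
Qed.

End VerticalChord.

Theorem theorem3p3 (P Q Rp : point) (t1 t2 t3 : R) :
  inD P -> inD Q -> inD Rp -> ~ collinear P Q Rp ->
  collinear (circ t1) (circ t2) P -> collinear (circ t1) (circ t2) Q ->
  (exists n : Z, 0 < t1 - t2 + IZR n <= / 2) ->
  (exists n : Z, 2 * t3 = t1 + t2 + IZR n) ->
  (exists n : Z, 0 < t3 - t2 + IZR n <= / 2) ->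
  let u := coord1 t3 P in
  let k := exp (dprime (circ t1) (circ t2) P Q) in
  let A := ellA k u in
  let B := ellB k u in
  let C := ellC k u in
  let E := fun X : point => ellF t3 A B C X = 1 in
  let Phi := fun X : point => ellF t3 A B C X < 1 in
  let Tri := circumscribing_triangle P Q Rp in
  (forall X, E X -> inD X \/ onS1 X) /\
  ellipse_tangent_S1_at t3 A B C (circ t1) /\
  ellipse_tangent_S1_at t3 A B C (circ t2) /\
  (Phi Rp -> cardinal (Ensemble point) Tri 0) /\
  (E Rp -> cardinal (Ensemble point) Tri 1) /\
  (~ Phi Rp -> ~ E Rp -> cardinal (Ensemble point) Tri 2).
Proof.
  (* The last hypothesis only selects one of the two solutions [T3]; either one works. *)
  intros HP HQ HR Hncol HcP HcQ Ht12 Ht3 _ u k A B C E Phi Tri.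
  destruct (chord_frame t1 t2 t3 Ht12 Ht3) as (v & w & Hw & HT1 & HT2).
  assert (HPu : coord1 t3 P = v)
    by (apply (coord1_on_vertical_chord t3 (circ t1) (circ t2) P v w); auto).
  assert (HQu : coord1 t3 Q = v)
    by (apply (coord1_on_vertical_chord t3 (circ t1) (circ t2) Q v w); auto).
  fold u in HPu. rewrite <- HPu in HT1, HT2, HQu.
  assert (Hu : u ^ 2 < 1) by (apply coord1_sq_lt_1; exact HP).
  assert (Hpq : coord2 t3 P <> coord2 t3 Q).
  { intros Hpq. apply Hncol. unfold collinear. rewrite <- (cross3_frame t3).
    unfold frame. fold u. rewrite HQu, Hpq. unfold cross3; cbn [fst snd]. ring. }
  assert (Hk : 0 < k) by apply exp_pos.
  destruct (apex_disc_ellF t3 u w (circ t1) (circ t2) P Q Rp HT1 HT2 (circ_onS1 t1) eq_refl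
    HQu HP HQ) as (c & Hc & Hdisc).
  split; [intros X; apply ellipse_in_closed_disk; auto|].
  split; [apply (ellipse_tangent_vertical k u Hk Hu t3 _ w); auto using circ_onS1|].
  split; [apply (ellipse_tangent_vertical k u Hk Hu t3 _ (- w)); auto using circ_onS1|].
  apply (circumscribing_triangle_count P Q Rp HP HQ HR
    (apex_line_off_vertical_chord t3 P Q Rp (eq_sym HQu) Hpq HP HQ HR) _ c Hc Hdisc).
  exists (circ t1). split; [apply circ_onS1|].
  rewrite <- (cross3_frame t3), HT1. unfold frame. fold u. rewrite HQu.
  unfold cross3; cbn [fst snd]. ring.
Qed.
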